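(* Let $(M,d)$ be a metric space and let $T: M \to M$ be an orbitally wrt nonexpansive mapping. Then $T$ diminishes the radius of invariant admissible subsets of $M$; that is, for every admissible set $A \subseteq M$ with $T(A)\subseteq A$ we have $r_{Tx}(T(A)) \le r_x(A)$ for every $x \in M$.
   Context: For $x\in M$ and $K\subseteq M$, $r_x(K)=\sup\{d(x,y): y\in K\}$. The orbit of $y$ is $O_T(y)=\{y,Ty,T^2y,\dots\}$. $T$ is orbitally wrt nonexpansive if $d(Tx,Ty)\le r_x(O_T(y))$ for all $x,y\in M$. A bounded subset $K\subseteq M$ is admissible if it equals its cover $\mathrm{cov}(K)$, the intersection of all closed balls of $M$ containing $K$; equivalently, it is a bounded intersection of closed balls of $M$. *)

(* distances valued in an abstract R : realType,
   suprema taken in the extended reals \bar R (orbits may be unbounded). *)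
From mathcomp Require Import all_boot all_order all_algebra.
From mathcomp Require Import all_classical all_reals ereal.
Set Implicit Arguments. Unset Strict Implicit. Unset Printing Implicit Defensive.
Import Order.TTheory GRing.Theory Num.Theory.
Local Open Scope classical_set_scope.
Local Open Scope ring_scope.

Definition is_metric (R : realType) (M : Type) (d : M -> M -> R) : Prop :=
  [/\ forall x y, 0 <= d x y,
      forall x y, d x y = 0 <-> x = y,
      forall x y, d x y = d y x &
      forall x y z, d x z <= d x y + d y z].

Definition rad_at (R : realType) (M : Type) (d : M -> M -> R) (x : M) (K : set M)
  : \bar R := ereal_sup [set (d x y)%:E | y in K].

Definition orbitT (M : Type) (T : M -> M) (y : M) : set M :=
  [set iter n T y | n in [set: nat]].

Definition orbitally_wrt_nonexpansive (R : realType) (M : Type)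
  (d : M -> M -> R) (T : M -> M) : Prop :=
  forall x y, ((d (T x) (T y))%:E <= rad_at d x (orbitT T y))%E.

Definition cball (R : realType) (M : Type) (d : M -> M -> R) (c : M) (r : R)
  : set M := [set y | d c y <= r].

Definition is_cball (R : realType) (M : Type) (d : M -> M -> R) (B : set M)
  : Prop := exists c r, 0 <= r /\ B = cball d c r.

Definition bounded_set (R : realType) (M : Type) (d : M -> M -> R) (K : set M)
  : Prop := exists c r, K `<=` cball d c r.

Definition cov (R : realType) (M : Type) (d : M -> M -> R) (K : set M) : set M :=
  \bigcap_(B in [set B | is_cball d B /\ K `<=` B]) B.

Definition admissible (R : realType) (M : Type) (d : M -> M -> R) (K : set M)
  : Prop := bounded_set d K /\ K = cov d K.

From mathcomp Require Import all_boot all_order all_algebra.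
From mathcomp Require Import all_classical all_reals ereal.
Import Order.TTheory.
Local Open Scope classical_set_scope.
Local Open Scope ring_scope.

(* The orbit of any point of a T-invariant set stays in the set, so orbital
   nonexpansiveness bounds d(Tx, Ty) by r_x(A) for every y in A; taking the
   supremum over y gives r_{Tx}(T(A)) <= r_x(A). *)

Lemma orbitT_sub (M : Type) (T : M -> M) (A : set M) (a : M) :
  T @` A `<=` A -> A a -> orbitT T a `<=` A.
Proof.
move=> TA Aa _ [n _ <-]; elim: n => [|n IHn] //=.
by apply: TA; exists (iter n T a).
Qed.

Lemma rad_at_subset (R : realType) (M : Type) (d : M -> M -> R) (x : M)
    (K L : set M) :
  K `<=` L -> (rad_at d x K <= rad_at d x L)%E.
Proof.
by move=> KL; apply/ereal_sup_le/image_subset.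
Qed.

Lemma orbitally_wrt_nonexpansive_invariant (R : realType) (M : Type)
    (d : M -> M -> R) (T : M -> M) (A : set M) (x a : M) :
  orbitally_wrt_nonexpansive d T -> T @` A `<=` A -> A a ->
  ((d (T x) (T a))%:E <= rad_at d x A)%E.
Proof.
move=> hT TA Aa; apply: le_trans (hT x a) _.
by apply: rad_at_subset; apply: orbitT_sub.
Qed.

Theorem lemma2p1 (R : realType) (M : Type) (d : M -> M -> R) (T : M -> M) :
  is_metric d -> orbitally_wrt_nonexpansive d T ->
  forall A : set M, admissible d A -> T @` A `<=` A ->
  forall x : M, (rad_at d (T x) (T @` A) <= rad_at d x A)%E.
Proof.
move=> _ hT A _ TA x.
apply: ge_ereal_sup => _ [_ [a Aa <-] <-].
exact: orbitally_wrt_nonexpansive_invariant.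
Qed.
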